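(* For any graph $\Gamma_1$ and any graph $\Gamma_2$ of order $n_2$ and maximum degree $\Delta_2$, and any integer $k$, $\gamma_{k-\Delta_2}^o(\Gamma_1\times\Gamma_2)\le n_2\,\gamma_k^o(\Gamma_1)$.
   Context: Graphs are finite and simple. In a graph $G=(V,E)$, for $S\subseteq V$ and $v\in V$, $\delta_S(v)$ is the number of neighbours of $v$ in $S$, $\overline{S}=V\setminus S$, and $\partial(S)$ the set of vertices of $\overline{S}$ with a neighbour in $S$. A nonempty $S$ is an offensive $k$-alliance in $G$ if $\delta_S(v)\ge\delta_{\overline{S}}(v)+k$ for every $v\in\partial(S)$, and a global offensive $k$-alliance if moreover it is dominating. $\gamma_k^o(G)$ is the minimum cardinality of a global offensive $k$-alliance in $G$. The Cartesian product $\Gamma_1\times\Gamma_2$ has vertex set $V_1\times V_2$, with $(u,v)\sim(u',v')$ iff either $u=u'$ and $v\sim v'$, or $v=v'$ and $u\sim u'$. *)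

From mathcomp Require Import all_boot all_order all_algebra.
Set Implicit Arguments. Unset Strict Implicit. Unset Printing Implicit Defensive.
Import Order.TTheory GRing.Theory Num.Theory.

Definition simple_graph (T : finType) (e : rel T) : Prop :=
  symmetric e /\ irreflexive e.

Section Alliances.
Variables (T : finType) (e : rel T).

Definition delta (S : {set T}) (v : T) : nat := #|[set w in S | e v w]|.

Definition boundary (S : {set T}) : {set T} :=
  [set v in ~: S | [exists w in S, e v w]].

Definition dominating (S : {set T}) : Prop :=
  forall v, v \notin S -> exists2 w, w \in S & e v w.

Definition offensive_alliance (k : int) (S : {set T}) : Prop :=
  S != set0 /\
  forall v, v \in boundary S ->
    ((delta S v)%:Z >= (delta (~: S) v)%:Z + k)%R.

Definition global_offensive_alliance (k : int) (S : {set T}) : Prop :=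
  offensive_alliance k S /\ dominating S.

Definition is_gamma_o (k : int) (g : nat) : Prop :=
  (exists S, global_offensive_alliance k S /\ #|S| = g) /\
  (forall S, global_offensive_alliance k S -> g <= #|S|).

Definition max_degree : nat := \max_(v : T) #|[set w | e v w]|.

End Alliances.

Definition cart_rel (T1 T2 : finType) (e1 : rel T1) (e2 : rel T2) :
  rel (T1 * T2) :=
  fun x y => ((x.1 == y.1) && e2 x.2 y.2) || ((x.2 == y.2) && e1 x.1 y.1).

From mathcomp Require Import all_boot all_order all_algebra.
From mathcomp Require Import zify.
From Stdlib Require Import Classical.
Import Order.TTheory GRing.Theory Num.Theory.

Set Implicit Arguments.
Unset Strict Implicit.
Unset Printing Implicit Defensive.

(* If S is a global offensive k-alliance of G1, then the "prism" S x V2 is a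
   global offensive (k - Delta2)-alliance of G1 x G2 of size n2 |S|.  A vertex
   (a, b) on its boundary has a on the boundary of S; inside S x V2 it keeps
   all its G1-neighbours (w, b) with w in S, while outside it has its
   G1-neighbours (w, b) with w outside S plus at most Delta2 neighbours
   (a, c) along the G2-fibre, so the alliance margin drops by at most Delta2. *)

Lemma ex_least_le (P : nat -> Prop) (n : nat) :
  P n -> exists m, [/\ P m, forall p, P p -> m <= p & m <= n].
Proof.
elim/ltn_ind: n => n IHn Pn.
have [[p [Pp ltpn]] | no_smaller] :=
  classic (exists p, P p /\ p < n).
  have [m [Pm min_m lemp]] := IHn p ltpn Pp.
  by exists m; split=> //; apply: leq_trans lemp (ltnW ltpn).
exists n; split=> // p Pp; rewrite leqNgt; apply/negP => ltpn.
by apply: no_smaller; exists p.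
Qed.

Lemma degree_le_max_degree (T : finType) (e : rel T) (v : T) :
  #|[set w | e v w]| <= max_degree e.
Proof. exact: (@leq_bigmax _ (fun v => #|[set w | e v w]|)). Qed.

Section Prism.
Variables (T1 T2 : finType) (e1 : rel T1) (e2 : rel T2) (S : {set T1}).

Local Notation e := (cart_rel e1 e2).
Local Notation prism := (setX S [set: T2]).

Lemma in_prism (x : T1 * T2) : (x \in prism) = (x.1 \in S).
Proof. by case: x => x1 x2; rewrite in_setX in_setT andbT. Qed.

Lemma dominating_prism : dominating e1 S -> dominating e prism.
Proof.
move=> domS [a b]; rewrite in_prism => /domS [w wS e_aw].
by exists (w, b); rewrite ?in_prism // /cart_rel /= eqxx e_aw orbT.
Qed.

Lemma boundary_prism (a : T1) (b : T2) :
  (a, b) \in boundary e prism -> a \in boundary e1 S.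
Proof.
rewrite !inE /= andbT => /andP [aNS /existsP [[w1 w2]]].
rewrite in_prism /cart_rel /= => /andP [w1S /orP [/andP [/eqP a_w1 _] | /andP [_ e_aw]]].
  by rewrite a_w1 w1S in aNS.
by rewrite aNS; apply/existsP; exists w1; rewrite w1S.
Qed.

Lemma delta_prism (a : T1) (b : T2) : delta e1 S a <= delta e prism (a, b).
Proof.
have inj_pair : injective (fun w : T1 => (w, b)) by move=> x y [].
rewrite /delta -(card_imset _ inj_pair).
apply/subset_leq_card/subsetP => _ /imsetP [w + ->].
by rewrite !inE /cart_rel /= eqxx andbT => /andP [-> ->]; rewrite orbT.
Qed.

Lemma delta_prismC (a : T1) (b : T2) :
  delta e (~: prism) (a, b) <= delta e1 (~: S) a + max_degree e2.
Proof.
rewrite /delta.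
set out1 := [set w in ~: S | e1 a w]; set fibre := [set c | e2 b c].
apply: (@leq_trans #|(fun w => (w, b)) @: out1 :|: (fun c => (a, c)) @: fibre|).
  apply/subset_leq_card/subsetP => -[x1 x2].
  rewrite !inE /cart_rel /= andbT => /andP [x1NS /orP [] /andP [/eqP <- ex]].
    by apply/orP; right; apply/imsetP; exists x2; rewrite ?inE.
  by apply/orP; left; apply/imsetP; exists x1; rewrite ?inE ?x1NS.
apply: leq_trans (leq_card_setU _ _) _; apply: leq_add; first exact: leq_imset_card.
apply: leq_trans (leq_imset_card _ _) _; exact: degree_le_max_degree.
Qed.

Lemma offensive_alliance_prism (k : int) :
  0 < #|T2| -> offensive_alliance e1 k S ->
  offensive_alliance e (k - (max_degree e2)%:Z) prism.
Proof.
case/card_gt0P => b0 _ [/set0Pn [a0 a0S] offS]; split.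
  by apply/set0Pn; exists (a0, b0); rewrite in_prism.
move=> [a b] /boundary_prism /offS.
have := delta_prism a b; have := delta_prismC a b.
move: (delta _ _ _) (delta _ _ _) (delta _ _ _) (delta _ _ _) (max_degree e2).
move=> *; lia.
Qed.

Lemma global_offensive_alliance_prism (k : int) :
  0 < #|T2| -> global_offensive_alliance e1 k S ->
  global_offensive_alliance e (k - (max_degree e2)%:Z) prism.
Proof.
move=> T2_gt0 [offS domS].
by split; [apply: offensive_alliance_prism | apply: dominating_prism].
Qed.

End Prism.

Lemma is_gamma_o_le_card (T : finType) (e : rel T) (k : int) (S : {set T}) :
  global_offensive_alliance e k S -> exists g, is_gamma_o e k g /\ g <= #|S|.
Proof.
move=> allS.
have [|g [[A [allA <-]] min_g le_g]] :=
  @ex_least_le (fun g => exists A, global_offensive_alliance e k A /\ #|A| = g) #|S|.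
  by exists S.
by exists #|A|; do !split=> //; [exists A | move=> B allB; apply: min_g; exists B].
Qed.

Theorem mainTheorem14 (T1 T2 : finType) (e1 : rel T1) (e2 : rel T2)
  (G1 : simple_graph e1) (G2 : simple_graph e2) (T2ne : 0 < #|T2|)
  (k : int) (g1 : nat) :
  is_gamma_o e1 k g1 ->
  exists g, is_gamma_o (cart_rel e1 e2) (k - (max_degree e2)%:Z)%R g /\
            g <= #|T2| * g1.
Proof.
move=> [[S [allS <-]] _].
have [g [gamma_g le_g]] :=
  is_gamma_o_le_card (global_offensive_alliance_prism e2 T2ne allS).
by exists g; rewrite mulnC -(cardsT T2) -cardsX.
Qed.
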